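(* Let $\mathcal{H}=(\mathcal{V},\mathcal{E})$ be a connected hypergraph and let $B(\mathcal{H})$ be its set of bridges. If $B(\mathcal{H})$ is a proper subset of $\mathcal{E}$ and the spanning sub-hypergraph $(\mathcal{V},B(\mathcal{H}))$ is connected, then $\lambda^2$ divides $P(\mathcal{H},\lambda)$.
   Context: A hypergraph $\mathcal{H}=(\mathcal{V},\mathcal{E})$ consists of a finite vertex set $\mathcal{V}$ and a set $\mathcal{E}$ of subsets of $\mathcal{V}$, each of size at least $1$, called edges. For a positive integer $\lambda$, a weak proper $\lambda$-colouring of $\mathcal{H}$ is a map $\phi:\mathcal{V}\to\{1,\dots,\lambda\}$ such that $|\{\phi(v):v\in e\}|>1$ for every $e\in\mathcal{E}$. $P(\mathcal{H},\lambda)$ denotes the number of weak proper $\lambda$-colourings of $\mathcal{H}$; it is a polynomial in $\lambda$. $\mathcal{H}$ is connected if for any two vertices $v_1,v_2$ there is a sequence of edges $e_0,\dots,e_k$ with $v_1\in e_0$, $v_2\in e_k$ and $e_i\cap e_{i+1}\neq\emptyset$ for all $i$. An edge $e$ of a connected hypergraph is a bridge if $\mathcal{H}-e$ (obtained by removing the edge $e$, keeping all vertices) is disconnected. *)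

From HB Require Import structures.
From mathcomp Require Import all_boot all_order all_algebra.
Set Implicit Arguments. Unset Strict Implicit. Unset Printing Implicit Defensive.
Import GRing.Theory.

(* A hypergraph on the finite vertex type V (vertex set = all of V) is given
   by its edge set E : {set {set V}}; every edge has size >= 1. *)
Definition hyper_edges_ok (V : finType) (E : {set {set V}}) : Prop :=
  forall e, e \in E -> 0 < #|e|.

Definition hconnected (V : finType) (E : {set {set V}}) : Prop :=
  forall v1 v2 : V, exists (e0 : {set V}) (s : seq {set V}),
    [/\ e0 \in E, all (fun e => e \in E) s, v1 \in e0, v2 \in last e0 s &
        path (fun a b : {set V} => a :&: b != set0) e0 s].

Definition is_bridge (V : finType) (E : {set {set V}}) (e : {set V}) : Prop :=
  e \in E /\ ~ hconnected (E :\ e).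

Definition weak_proper (V : finType) (E : {set {set V}}) (l : nat)
  (phi : {ffun V -> 'I_l}) : bool :=
  [forall e in E, exists x in e, exists y in e, phi x != phi y].

Definition ncol (V : finType) (E : {set {set V}}) (l : nat) : nat :=
  #|[set phi : {ffun V -> 'I_l} | weak_proper E phi]|.

(* p is the chromatic polynomial P(H, lambda): it agrees with the number of
   weak proper lambda-colourings at every positive integer lambda (this
   determines p uniquely). *)
Definition is_chrom_poly (V : finType) (E : {set {set V}}) (p : {poly int}) : Prop :=
  forall l : nat, (0 < l)%N -> (p.[l%:Z])%R = ((ncol E l)%:Z)%R.

From HB Require Import structures.
From mathcomp Require Import all_boot all_order all_algebra.
From mathcomp Require Import zify.
Import GRing.Theory.
Set Implicit Arguments. Unset Strict Implicit. Unset Printing Implicit Defensive.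

(* Inclusion-exclusion over the set of monochromatic edges gives
   P(H, l) = sum_(F <= E) (-1)^|F| l^c(F), where c(F) >= 1 is the number of
   connected components of the spanning sub-hypergraph (V, F).  So l^2 divides
   P(H, l) as soon as the coefficient of l, the signed count of the connected
   spanning sub-hypergraphs, vanishes.  A connected F contains every bridge;
   as the bridges alone already connect V, adding or removing a fixed non-bridge
   edge e0 keeps F connected and flips the sign, so these terms cancel in pairs. *)

Section Components.
Variable V : finType.
Implicit Types (F G : {set {set V}}) (x y : V).

Definition hadj F : rel V := fun x y => [exists e in F, (x \in e) && (y \in e)].

Lemma hadj_sym F : symmetric (hadj F).
Proof.
by move=> x y; apply/existsP/existsP => -[e /and3P[eF xe ye]]; exists e; rewrite eF xe ye.
Qed.

Lemma connect_hadj_sym F : connect_sym (hadj F).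
Proof. exact/sym_connect_sym/hadj_sym. Qed.

Definition ncomp F : nat := #|roots (hadj F)|.

(* Unlike [hconnected], [linked] does not ask every vertex to lie on an edge of F,
   hence the two distinct vertices needed in [linked_hconnected]. *)
Definition linked F : Prop := forall x y, connect (hadj F) x y.

Lemma linkedS F G : F \subset G -> linked F -> linked G.
Proof.
move=> sFG hF x y; apply: connect_sub (hF x y) => {}x {}y /exists_inP[e eF /andP[xe ye]].
by apply/connect1/exists_inP; exists e; rewrite ?(subsetP sFG) ?xe ?ye.
Qed.

Lemma edge_path_connect F e0 s x y :
  e0 \in F -> all [in F] s -> x \in e0 -> y \in last e0 s ->
  path (fun e e' : {set V} => e :&: e' != set0) e0 s -> connect (hadj F) x y.
Proof.
elim: s e0 x => [|e1 s IH] e0 x /= e0F.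
  by move=> _ xe0 ye0 _; apply/connect1/exists_inP; exists e0; rewrite ?xe0.
case/andP=> e1F sF xe0 ylast /andP[/set0Pn[z]]; rewrite inE => /andP[ze0 ze1] p.
apply: (@connect_trans _ _ z); last exact: (IH e1).
by apply/connect1/exists_inP; exists e0; rewrite ?xe0.
Qed.

Lemma hconnected_linked F : hconnected F -> linked F.
Proof.
by move=> hF x y; have [e0 [s [e0F sF xe0 ylast p]]] := hF x y; exact: edge_path_connect p.
Qed.

Lemma hadj_path_edge_path F x p :
  path (hadj F) x p -> p != [::] ->
  exists (e0 : {set V}) (s : seq {set V}),
    [/\ e0 \in F, all [in F] s, x \in e0, last x p \in last e0 s &
        path (fun e e' : {set V} => e :&: e' != set0) e0 s].
Proof.
elim: p x => [|y p IH] x //= /andP[/exists_inP[e eF /andP[xe ye]] p_path] _.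
case: p IH p_path => [|z p] IH p_path; first by exists e, [::].
have [e0 [s [e0F sF ye0 zlast p']]] := IH y p_path isT.
exists e, (e0 :: s); split => //=; first by rewrite e0F.
by rewrite p' andbT; apply/set0Pn; exists y; rewrite inE ye ye0.
Qed.

Lemma linked_hconnected (a b : V) F : a != b -> linked F -> hconnected F.
Proof.
move=> a_neq_b hF.
have edge_path x y : x != y -> exists (e0 : {set V}) (s : seq {set V}),
    [/\ e0 \in F, all [in F] s, x \in e0, y \in last e0 s &
        path (fun e e' : {set V} => e :&: e' != set0) e0 s].
  move=> x_neq_y; have /connectP[[|z p] xp y_last] := hF x y.
    by rewrite y_last eqxx in x_neq_y.
  by rewrite y_last; exact: hadj_path_edge_path.
move=> x y; have [<-|] := eqVneq x y; last exact: edge_path.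
have [w x_neq_w] : exists w, x != w.
  by have [->|] := eqVneq x a; [exists b | exists a].
by have [e0 [s [e0F _ xe0 _ _]]] := edge_path x w x_neq_w; exists e0, [::].
Qed.

Lemma ncomp_gt0 (x0 : V) F : 0 < ncomp F.
Proof.
by apply/card_gt0P; exists (fingraph.root (hadj F) x0); apply/roots_root/connect_hadj_sym.
Qed.

Lemma ncomp1P (x0 : V) F : reflect (linked F) (ncomp F == 1).
Proof.
have csym := connect_hadj_sym F.
apply: (iffP card1P) => [[r rootsE] x y|hF].
  have root_r z : fingraph.root (hadj F) z = r.
    by apply/eqP; rewrite -[_ == r]/(_ \in pred1 r) -rootsE; exact: roots_root.
  by apply/(fingraph.rootP csym); rewrite !root_r.
exists (fingraph.root (hadj F) x0) => x; rewrite !inE.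
apply/idP/eqP => [/eqP <-|->]; last exact: roots_root.
exact/(fingraph.rootP csym)/hF.
Qed.

End Components.

Section Colourings.
Variable V : finType.
Implicit Types (E F : {set {set V}}) (e : {set V}) (l : nat).

Definition mono_edge l (phi : {ffun V -> 'I_l}) e : bool :=
  [forall x in e, forall y in e, phi x == phi y].

Definition monochromatic F l (phi : {ffun V -> 'I_l}) : bool :=
  [forall e in F, mono_edge phi e].

Lemma monochromaticP F l (phi : {ffun V -> 'I_l}) :
  reflect (forall x y, hadj F x y -> phi x = phi y) (monochromatic F phi).
Proof.
apply: (iffP forall_inP) => [mono x y /exists_inP[e eF /andP[xe ye]]|mono e eF].
  by have /forall_inP/(_ x xe)/forall_inP/(_ y ye)/eqP := mono e eF.
apply/forall_inP => x xe; apply/forall_inP => y ye; apply/eqP/mono.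
by apply/exists_inP; exists e; rewrite ?xe.
Qed.

Lemma monochromatic_root F l (phi : {ffun V -> 'I_l}) :
  monochromatic F phi = [forall x, phi x == phi (fingraph.root (hadj F) x)].
Proof.
have csym := connect_hadj_sym F.
apply/monochromaticP/forallP => [mono x|root_phi x y xy]; last first.
  have /(fingraph.rootP csym) root_xy : connect (hadj F) x y by apply: connect1.
  by rewrite (eqP (root_phi x)) (eqP (root_phi y)) root_xy.
have /connectP[p p_path ->] := connect_root (hadj F) x.
by elim: p x p_path => [|z p IH] x //= /andP[/mono-> /IH].
Qed.

Definition mono_edges E l (phi : {ffun V -> 'I_l}) : {set {set V}} :=
  [set e in E | mono_edge phi e].

Lemma monochromatic_mono_edges E F l (phi : {ffun V -> 'I_l}) :
  F \subset E -> monochromatic F phi = (F \subset mono_edges E phi).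
Proof.
move=> sFE; apply/forall_inP/subsetP => mono e eF; first by rewrite inE (subsetP sFE) ?mono.
by have := mono e eF; rewrite inE => /andP[].
Qed.

Lemma weak_proper_mono_edges E l (phi : {ffun V -> 'I_l}) :
  weak_proper E phi = (mono_edges E phi == set0).
Proof.
apply/forall_inP/eqP => [proper|none e eE].
  apply/setP => e; rewrite !inE; apply/andP => -[eE /forall_inP mono].
  have /exists_inP[x xe /exists_inP[y ye]] := proper e eE.
  by have /forall_inP/(_ y ye)-> := mono x xe.
have : e \notin mono_edges E phi by rewrite none inE.
rewrite inE eE => /forall_inPn[x xe /forall_inPn[y ye xy]].
by apply/exists_inP; exists x => //; apply/exists_inP; exists y.
Qed.

Lemma card_monochromatic F l :
  #|[set phi : {ffun V -> 'I_l.+1} | monochromatic F phi]| = l.+1 ^ ncomp F.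
Proof.
have csym := connect_hadj_sym F.
set r := fingraph.root (hadj F).
pose lift (psi : {ffun V -> 'I_l.+1}) := [ffun x => psi (r x)].
have -> : [set phi | monochromatic F phi] =
          [set lift psi | psi in pffun_on ord0 (roots (hadj F)) predT].
  apply/setP => phi; rewrite inE monochromatic_root; apply/forallP/imsetP.
    move=> root_phi; exists [ffun x => if roots (hadj F) x then phi x else ord0].
      apply/pffun_onP; split => //; apply/subsetP => x.
      by rewrite !inE ffunE; case: ifP; rewrite ?eqxx.
    by apply/ffunP => x; rewrite !ffunE roots_root // (eqP (root_phi x)).
  by move=> [psi _ ->] x; rewrite !ffunE /r root_root.
rewrite card_in_imset ?card_pffun_on ?card_ord // => psi1 psi2.
move=> /pffun_onP[supp1 _] /pffun_onP[supp2 _] /ffunP lift_eq; apply/ffunP => x.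
have [rx_x|x_not_root] := eqVneq (r x) x; first by have := lift_eq x; rewrite !ffunE rx_x.
have off_support psi : ord0.-support psi \subset roots (hadj F) -> psi x = ord0.
  move=> /subsetP/(_ x) supp; apply/eqP; apply: contraNT x_not_root => psi_x.
  by apply: supp; rewrite inE.
by rewrite !off_support.
Qed.

End Colourings.

Local Open Scope ring_scope.

Lemma sum_odd_involution_eq0 (I : finType) (f : I -> I) (P : pred I) (c : I -> int) :
  involutive f -> (forall i, P (f i) = P i) -> (forall i, c (f i) = - c i) ->
  \sum_(i | P i) c i = 0.
Proof.
move=> fK Pf cf.
have : \sum_(i | P i) c i = - \sum_(i | P i) c i.
  rewrite {1}(reindex_inj (inv_inj fK)) -sumrN.
  by apply: eq_big => [i|i _]; rewrite ?Pf ?cf.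
lia.
Qed.

Section Toggle.
Variable T : finType.
Implicit Types (x : T) (A F : {set T}).

Definition toggle x F : {set T} := if x \in F then F :\ x else x |: F.

Lemma toggleK x : involutive (toggle x).
Proof.
move=> F; rewrite /toggle; case: (boolP (x \in F)) => xF.
  by rewrite setD11 setD1K.
by rewrite setU11 setU1K.
Qed.

Lemma sign_toggle x F : (-1) ^+ #|toggle x F| = - (-1) ^+ #|F| :> int.
Proof.
rewrite /toggle; case: ifP => xF; last by rewrite cardsU1 xF exprS mulN1r.
by rewrite [in RHS](cardsD1 x) xF exprS mulN1r opprK.
Qed.

Lemma toggle_subset x A F : x \in A -> (toggle x F \subset A) = (F \subset A).
Proof.
move=> xA; rewrite /toggle; case: ifP => xF; last by rewrite subUset sub1set xA.
by rewrite -{2}(setD1K xF) subUset sub1set xA.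
Qed.

Lemma sum_sign_subsets A :
  \sum_(F : {set T} | F \subset A) (-1) ^+ #|F| = (A == set0)%:R :> int.
Proof.
have [->|[x xA]] := set_0Vmem A.
  by rewrite eqxx (eq_bigl (pred1 set0)) => [|F]; rewrite ?big_pred1_eq ?cards0 ?subset0.
have /negPf-> : A != set0 by apply/set0Pn; exists x.
by apply: (sum_odd_involution_eq0 (toggleK x)) => F; rewrite ?toggle_subset ?sign_toggle.
Qed.

End Toggle.

Lemma card_indicator (I : finType) (A : pred I) : #|A|%:Z = \sum_i (i \in A)%:R.
Proof.
rewrite -sum1_card -natz natr_sum big_mkcond.
by apply: eq_bigr => i _; case: (i \in A).
Qed.

Lemma ncol_inclusion_exclusion (V : finType) (E : {set {set V}}) l :
  (ncol E l)%:Z = \sum_(F : {set {set V}} | F \subset E)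
                    (-1) ^+ #|F| * #|[set phi : {ffun V -> 'I_l} | monochromatic F phi]|%:Z.
Proof.
have restrict_to_E (phi : {ffun V -> 'I_l}) :
    \sum_(F : {set {set V}} | F \subset mono_edges E phi) (-1) ^+ #|F| =
    \sum_(F : {set {set V}} | F \subset E) (-1) ^+ #|F| * (F \subset mono_edges E phi)%:R.
  rewrite big_mkcond [RHS]big_mkcond; apply: eq_bigr => F _.
  have [sFM|_] := boolP (F \subset mono_edges E phi); last by case: ifP; rewrite ?mulr0.
  suff -> : F \subset E by rewrite mulr1.
  by apply: subset_trans sFM _; apply/subsetP => e; rewrite inE => /andP[].
rewrite /ncol card_indicator.
under eq_bigr => phi _ do rewrite inE weak_proper_mono_edges -sum_sign_subsets restrict_to_E.
rewrite exchange_big /=; apply: eq_bigr => F sFE.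
rewrite card_indicator mulr_sumr; apply: eq_bigr => phi _.
by rewrite inE (monochromatic_mono_edges _ sFE).
Qed.

Definition chromatic_expansion (V : finType) (E : {set {set V}}) : {poly int} :=
  \sum_(F : {set {set V}} | F \subset E) (-1) ^+ #|F| *: 'X^(ncomp F).

Lemma chromatic_expansionP (V : finType) (E : {set {set V}}) :
  is_chrom_poly E (chromatic_expansion E).
Proof.
move=> [//|l] _; rewrite horner_sum ncol_inclusion_exclusion; apply: eq_bigr => F _.
by rewrite hornerZ hornerXn card_monochromatic -[in RHS]natz natrX natz.
Qed.

Lemma dvdp_X2_sum (R : idomainType) (I : finType) (P : pred I) (n : I -> nat) (a : I -> R) :
  (forall i, P i -> (0 < n i)%N) -> \sum_(i | P i && (n i == 1)%N) a i = 0 ->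
  'X^2 %| \sum_(i | P i) a i *: 'X^(n i).
Proof.
move=> n_gt0 sum1_eq0; rewrite (bigID (fun i => n i == 1)%N) /=; apply: dvdp_add.
  rewrite (eq_bigr (fun i => a i *: 'X)) => [|i /andP[_ /eqP->]] //.
  by rewrite -scaler_suml sum1_eq0 scale0r dvdp0.
rewrite (eq_bigr (fun i => 'X^2 * (a i *: 'X^(n i - 2)))) => [|i /andP[Pi n_neq1]].
  by rewrite -big_distrr dvdp_mulr.
rewrite -scalerAr -exprD subnKC //.
by move: (n_gt0 i Pi) n_neq1; case: (n i) => [|[|]].
Qed.

Section NonBridge.
Variables (V : finType) (E B : {set {set V}}) (e0 : {set V}) (a b : V).
Hypotheses (bridgesE : forall e, e \in B <-> is_bridge E e) (B_hconnected : hconnected B).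
Hypotheses (e0E : e0 \in E) (e0_notin_B : e0 \notin B) (a_neq_b : a != b).
Implicit Type F : {set {set V}}.

Lemma linked_bridges_sub F : F \subset E -> linked F -> B \subset F.
Proof.
move=> sFE F_linked; apply/subsetP => e eB; apply: contraT => eF.
have [_ []] := (bridgesE e).1 eB; apply: (linked_hconnected a_neq_b) (linkedS _ F_linked).
by apply/subsetP => e' e'F; rewrite !inE (subsetP sFE) // andbT; apply: contraNneq eF => <-.
Qed.

Lemma linked_toggle F : F \subset E -> linked F -> linked (toggle e0 F).
Proof.
move=> sFE /(linked_bridges_sub sFE) sBF; apply: linkedS (hconnected_linked B_hconnected).
apply/subsetP => e eB; have e_neq_e0 : e != e0 by apply: contraNneq e0_notin_B => <-.
by rewrite /toggle; case: ifP => _; rewrite !inE (negPf e_neq_e0) (subsetP sBF).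
Qed.

Lemma sum_sign_connected_eq0 :
  \sum_(F : {set {set V}} | (F \subset E) && (ncomp F == 1)%N) (-1) ^+ #|F| = 0 :> int.
Proof.
apply: (sum_odd_involution_eq0 (toggleK e0)) => [F|F]; last exact: sign_toggle.
rewrite toggle_subset //; apply/andP/andP => -[sFE /(ncomp1P a) F_linked]; split => //.
  by rewrite -(toggleK e0 F); apply/(ncomp1P a)/linked_toggle; rewrite ?toggle_subset.
exact/(ncomp1P a)/linked_toggle.
Qed.

End NonBridge.

Lemma exists_neq_of_distinct_sets (T : finType) (a : T) (e e' : {set T}) :
  a \in e -> a \in e' -> e != e' -> exists b, a != b.
Proof.
move=> ae ae' e_neq_e'; have [x a_neq_x|a_only] := pickP (fun x => a != x); first by exists x.
suff e_eq_e' : e = e' by rewrite e_eq_e' eqxx in e_neq_e'.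
by apply/setP => x; have /negbFE/eqP<- := a_only x; rewrite ae ae'.
Qed.

Unset Implicit Arguments.

Theorem theorem3 (V : finType) (E : {set {set V}}) (B : {set {set V}}) :
  hyper_edges_ok E ->
  hconnected E ->
  (forall e, e \in B <-> is_bridge E e) ->
  B \proper E ->
  hconnected B ->
  exists p : {poly int}, is_chrom_poly E p /\ ('X ^+ 2 %| p).
Proof.
(* Connectivity of E follows from that of B. *)
move=> edges_ok _ bridgesE /properP[_ [e0 e0E e0_notin_B]] B_hconnected.
have [a ae0] : exists a, a \in e0 by apply/set0Pn; rewrite -card_gt0 edges_ok.
have [e [_ [eB _ ae _ _]]] := B_hconnected a a.
have [b a_neq_b] : exists b, a != b.
  by apply: (exists_neq_of_distinct_sets ae ae0); apply: contraNneq e0_notin_B => <-.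
exists (chromatic_expansion E); split; first exact: chromatic_expansionP.
apply: dvdp_X2_sum => [F _|]; first exact: ncomp_gt0 a F.
exact: sum_sign_connected_eq0 bridgesE B_hconnected e0E e0_notin_B a_neq_b.
Qed.
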